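(* Let $x$ be a positive integer. Then both $6x-1$ and $6x+1$ are prime if and only if there is no prime $p \geq 5$ with $p < 6x-1$ such that $x \equiv -\kappa(p) \pmod{p}$ or $x \equiv +\kappa(p) \pmod{p}$.
   Context: For a prime $p \geq 5$ define $\kappa(p) = \frac{p+1}{6}$ if $p \equiv -1 \pmod 6$ and $\kappa(p) = \frac{p-1}{6}$ if $p \equiv +1 \pmod 6$ (so $p = 6\kappa(p) \mp 1$ is an integer of the form $6k\pm 1$ with $k=\kappa(p)$). *)

From mathcomp Require Import all_boot all_order all_algebra.
Set Implicit Arguments. Unset Strict Implicit. Unset Printing Implicit Defensive.

(* kappa p = (p+1)/6 if p = -1 mod 6, (p-1)/6 if p = +1 mod 6.
   For primes p >= 5 exactly one of these cases holds; for other p the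
   value is irrelevant (the statement only uses kappa at primes p >= 5). *)
Definition kappa (p : nat) : nat :=
  if p %% 6 == 5 then (p + 1) %/ 6 else (p - 1) %/ 6.

From mathcomp Require Import all_boot all_order all_algebra.
From mathcomp Require Import zify.
Import GRing.Theory.
Set Implicit Arguments. Unset Strict Implicit. Unset Printing Implicit Defensive.

(* For a prime p >= 5 we have 6 kappa(p) = p + e with e = +-1, so 6 kappa(p)
   is congruent to e modulo p.  As 6 is invertible modulo p, x = +-kappa(p)
   (mod p) is equivalent to p dividing 6x - 1 or 6x + 1.  Hence the
   condition says that neither 6x - 1 nor 6x + 1 has a prime factor
   5 <= p < 6x - 1; since 2 and 3 divide neither, and a composite number has
   a prime factor at most its square root, this is primality of both. *)

Lemma prime_ge5_mod6 p : prime p -> 5 <= p -> p %% 6 = 1 \/ p %% 6 = 5.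
Proof.
case/primeP => _ p_div p_ge5.
have not2 : ~~ (2 %| p) by apply/negP => /p_div /orP [] /eqP; lia.
have not3 : ~~ (3 %| p) by apply/negP => /p_div /orP [] /eqP; lia.
lia.
Qed.

Lemma kappa_spec p : prime p -> 5 <= p ->
  (6 * (kappa p)%:Z = p%:Z + 1 \/ 6 * (kappa p)%:Z = p%:Z - 1)%R.
Proof.
move=> p_pr p_ge5; rewrite /kappa.
by case: (prime_ge5_mod6 p_pr p_ge5) => p_mod6; rewrite p_mod6 /=; [right|left]; lia.
Qed.

Lemma dvdz_mul6 p (a : int) : prime p -> 5 <= p ->
  (p%:Z %| (6 * a)%R)%Z = (p%:Z %| a)%Z.
Proof.
move=> p_pr p_ge5; rewrite Gauss_dvdzr // coprimezE /= prime_coprime //.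
apply/negP => p_dvd6; have := dvdn_leq (isT : 0 < 6) p_dvd6.
by case: p p_pr p_ge5 p_dvd6 => [|[|[|[|[|[|[|]]]]]]].
Qed.

Lemma eqz_mod_kappa p (x e : int) : prime p -> 5 <= p ->
  (6 * (kappa p)%:Z = p%:Z + e)%R ->
  ((x = (kappa p)%:Z %[mod p%:Z])%Z <-> (p%:Z %| (6 * x - e)%R)%Z) /\
  ((x = - (kappa p)%:Z %[mod p%:Z])%Z <-> (p%:Z %| (6 * x + e)%R)%Z).
Proof.
move=> p_pr p_ge5 kappaE.
have eqz_modP (a b : int) : (a = b %[mod p%:Z])%Z <-> (p%:Z %| (6 * (a - b))%R)%Z.
  by rewrite dvdz_mul6 // -eqz_mod_dvd; split => [-> | /eqP].
rewrite !eqz_modP mulrBr mulrDr opprK kappaE.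
have -> : (6 * x - (p%:Z + e) = (6 * x - e) - p%:Z)%R by lia.
have -> : (6 * x + (p%:Z + e) = (6 * x + e) + p%:Z)%R by lia.
by rewrite !(rpredBr _ (dvdzz _), rpredDr _ (dvdzz _)).
Qed.

Lemma eqz_mod_kappa_dvd p (x : int) : prime p -> 5 <= p ->
  ((x = - (kappa p)%:Z %[mod p%:Z])%Z \/ (x = (kappa p)%:Z %[mod p%:Z])%Z) <->
  ((p%:Z %| (6 * x - 1)%R)%Z \/ (p%:Z %| (6 * x + 1)%R)%Z).
Proof.
move=> p_pr p_ge5.
case: (kappa_spec p_pr p_ge5) => [|kappaE].
  by case/(eqz_mod_kappa x p_pr p_ge5) => -> ->; rewrite or_comm.
by case: (eqz_mod_kappa x p_pr p_ge5 kappaE) => -> ->; rewrite opprK.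
Qed.

Lemma eqz_mod_kappa_dvdn p x : 0 < x -> prime p -> 5 <= p ->
  ((x%:Z = - (kappa p)%:Z %[mod p%:Z])%Z \/ (x%:Z = (kappa p)%:Z %[mod p%:Z])%Z) <->
  (p %| 6 * x - 1 \/ p %| 6 * x + 1).
Proof.
move=> x_gt0 p_pr p_ge5; rewrite eqz_mod_kappa_dvd // !dvdzE.
have -> : `|(6 * x%:Z - 1)%R|%N = 6 * x - 1 by lia.
by have -> : `|(6 * x%:Z + 1)%R|%N = 6 * x + 1 by lia.
Qed.

Lemma prime_factor_ge5 n : 1 < n -> ~~ prime n -> ~~ (2 %| n) -> ~~ (3 %| n) ->
  exists q, [/\ prime q, 5 <= q, q ^ 2 <= n & q %| n].
Proof.
move=> n_gt1 /primePns [|[q [q_pr q_sq q_dvd]] not2 not3]; first lia.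
exists q; split => //.
have : q != 2 by apply: contraNneq not2 => <-.
have : q != 3 by apply: contraNneq not3 => <-.
have : q != 4 by apply: contraTneq q_pr => ->.
by have := prime_gt1 q_pr; lia.
Qed.

Theorem theorem1 (x : nat) (hx : 0 < x) :
  (prime (6 * x - 1) /\ prime (6 * x + 1)) <->
  ~ (exists p : nat,
       [/\ prime p, 5 <= p, p < 6 * x - 1 &
        ((x%:Z = - (kappa p)%:Z %[mod p%:Z])%Z \/
         (x%:Z = (kappa p)%:Z %[mod p%:Z])%Z)]).
Proof.
split.
- case=> pr_m pr_p [p [p_pr p_ge5 p_lt /(eqz_mod_kappa_dvdn hx p_pr p_ge5)]].
  have p_ndvd n : prime n -> p < n -> ~~ (p %| n).
    by move=> n_pr p_lt_n; rewrite dvdn_prime2 // neq_ltn p_lt_n.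
  by case; apply/negP; apply: p_ndvd => //; lia.
- move=> no_p; suff pr n : n = 6 * x - 1 \/ n = 6 * x + 1 -> prime n.
    by split; apply: pr; [left|right].
  move=> n_def; apply/negPn/negP => composite.
  have [|||q [q_pr q_ge5 q_sq q_dvd]] := prime_factor_ge5 _ composite; try lia.
  apply: no_p; exists q; split => //; first nia.
  by apply/(eqz_mod_kappa_dvdn hx q_pr q_ge5); case: n_def q_dvd => -> ?; [left|right].
Qed.
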